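(* Let $n\in\mathbb{N}$, let $c=(c_{i,j})$ be an $n\times(n+1)$ matrix with entries in $\{0,1\}$ such that every row and every column contains at least one entry equal to $1$, let $\sigma_1,\ldots,\sigma_n>0$, $\gamma_1,\ldots,\gamma_{n+1}>0$ with $\gamma^\ast=\gamma_1+\cdots+\gamma_{n+1}>1$. Let $\mathbf{X}=(X_1,\ldots,X_n)'$ have decumulative distribution function \[ \mathbf{P}[X_1>x_1,\ldots,X_n>x_n]=\prod_{j=1}^{n+1}\left(1+\sum_{i=1}^n\frac{c_{i,j}}{\sigma_i}x_i\right)^{-\gamma_j},\quad (x_1,\ldots,x_n)'\in(0,\infty)^n, \] and $X_-=\min_{1\le i\le n}X_i$. For $j=1,\ldots,n+1$ put $\alpha_j=\left(\sum_{i=1}^nc_{i,j}/\sigma_i\right)^{-1}$ and $\alpha_+(\boldsymbol{\sigma})=\max_{1\le j\le n+1}\alpha_j$. Let $K$ be a nonnegative integer-valued random variable with $p_k=\mathbf{P}[K=k]=c_+\delta_k$, $k=0,1,\ldots$, where $c_+=\prod_{j=1}^{n+1}(\alpha_j/\alpha_+(\boldsymbol{\sigma}))^{\gamma_j}$, $\delta_0=1$ and $\delta_k=k^{-1}\sum_{l=1}^k\sum_{j=1}^{n+1}\gamma_j(1-\alpha_j/\alpha_+(\boldsymbol{\sigma}))^l\delta_{k-l}$ for $k>0$. Then $X_-\sim Pa(II)(\alpha_+(\boldsymbol{\sigma}),\gamma^\ast+K)$, i.e. \[ \mathbf{P}[X_->x]=\sum_{k=0}^\infty p_k\left(1+\frac{x}{\alpha_+(\boldsymbol{\sigma})}\right)^{-(\gamma^\ast+k)},\quad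 x>0. \]
   Context: $Pa(II)(\sigma,\alpha)$ is the Pareto distribution of the 2nd kind with decumulative distribution function $(1+x/\sigma)^{-\alpha}$, $x>0$; with a random tail index $\gamma^\ast+K$ it denotes the corresponding mixture over the law of $K$. *)

From HB Require Import structures.
From mathcomp Require Import all_boot all_order all_algebra.
From mathcomp Require Import all_classical all_reals all_analysis.
Set Implicit Arguments. Unset Strict Implicit. Unset Printing Implicit Defensive.
Import Order.TTheory GRing.Theory Num.Theory.
Local Open Scope ring_scope.

Definition alpha (R : realType) (n : nat) (c : 'M[R]_(n, n.+1))
  (sigma : 'I_n -> R) (j : 'I_n.+1) : R :=
  (\sum_(i < n) c i j / sigma i)^-1.

(* alpha_+(sigma) = max_j alpha_j  (all alpha_j > 0, so 0 is a neutral start) *)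
Definition alpha_plus (R : realType) (n : nat) (c : 'M[R]_(n, n.+1))
  (sigma : 'I_n -> R) : R :=
  \big[Num.max/0]_(j < n.+1) alpha c sigma j.

Definition gamma_star (R : realType) (n : nat) (gamma : 'I_n.+1 -> R) : R :=
  \sum_(j < n.+1) gamma j.

Definition c_plus (R : realType) (n : nat) (c : 'M[R]_(n, n.+1))
  (sigma : 'I_n -> R) (gamma : 'I_n.+1 -> R) : R :=
  \prod_(j < n.+1) (alpha c sigma j / alpha_plus c sigma) `^ (gamma j).

Definition Xmin (R : realType) (T : Type) (n : nat) (X : 'I_n -> T -> R)
  (w : T) : \bar R :=
  \big[Order.min/+oo%E]_(i < n) ((X i w)%:E).

From HB Require Import structures.
From mathcomp Require Import all_boot all_order all_algebra.
From mathcomp Require Import all_classical all_reals all_analysis.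
From mathcomp Require Import ring lra zify.
Set Implicit Arguments.
Unset Strict Implicit.
Unset Printing Implicit Defensive.
Import Order.TTheory GRing.Theory Num.Theory numFieldNormedType.Exports.
Local Open Scope classical_set_scope.
Local Open Scope ring_scope.

(* P[X_- > x] = P[X_1 > x, ..., X_n > x] = prod_j (1 + x / alpha_j)^(-gamma_j).
   With y = 1 + x / alpha_+, t = 1 / y and q_j = 1 - alpha_j / alpha_+ in [0, 1),
   each factor splits as (alpha_+ / alpha_j) y (1 - q_j t), so the probability is
   c_+ y^(-gamma_star) f(t) with f(t) = prod_j (1 - q_j t)^(-gamma_j).
   The recursion for delta reads k delta_k = sum_l s_l delta_(k-l) with
   s_l = sum_j gamma_j q_j^l: it is the coefficient form of S' = S (ln f)', S(0) = 1,
   whose solution is f.  It remains to show that the partial sums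
   S_N(t) = sum_(k<N) delta_k t^k converge to f(t).  Their defect S_N' - S_N (ln f)'
   is a sum of nonpositive tail terms on [0, 1], and for max_j q_j, t < rho < 1 it is
   at least -K rho^N on [0, t], because S_N <= f forces delta_k t^k to decay like
   rho^k.  The mean value theorem applied to ln S_N - ln f, which vanishes at 0,
   then gives f(t) (1 - K rho^N) <= S_N(t) <= f(t). *)

Lemma sum_expr_le (R : realFieldType) (r : R) n :
  0 <= r < 1 -> \sum_(i < n) r ^+ i <= (1 - r)^-1.
Proof.
move=> /andP[r0 r1]; have r1' : 0 < 1 - r by rewrite subr_gt0.
have e : (1 - r) * \sum_(i < n) r ^+ i = 1 - r ^+ n.
  by rewrite -opprB mulNr -subrX1 opprB.
by rewrite -(ler_pM2l r1') e mulfV ?lt0r_neq0 // gerBl exprn_ge0.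
Qed.

Lemma sum_expr1_le (R : realFieldType) (r : R) n :
  0 <= r < 1 -> \sum_(1 <= l < n) r ^+ l <= (1 - r)^-1.
Proof.
move=> r01; have /andP[_ r1] := r01.
case: n => [|n]; first by rewrite big_geq // invr_ge0 subr_ge0 ltW.
apply: (le_trans _ (sum_expr_le n.+1 r01)).
by rewrite -(big_mkord xpredT) big_ltn // lerDr expr0 ler01.
Qed.

Lemma geometric_expansion (R : fieldType) (r x : R) N : r * x != 1 ->
  r / (1 - r * x) =
  \sum_(1 <= l < N.+1) r ^+ l * x ^+ l.-1 + r ^+ N.+1 * x ^+ N / (1 - r * x).
Proof.
move=> rx; have rx' : 1 - r * x != 0 by rewrite subr_eq0 eq_sym.
elim: N => [|N IH]; first by rewrite big_geq // add0r expr1 expr0 mulr1.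
by rewrite big_nat_recr //= -addrA IH; congr (_ + _); rewrite !exprS; field.
Qed.

Section GeneratingFunction.
Variables (R : realType) (m : nat) (g q : 'I_m -> R) (a : nat -> R).
Hypotheses (g_ge0 : forall j, 0 <= g j) (q_ge0 : forall j, 0 <= q j)
  (q_lt1 : forall j, q j < 1).
Hypothesis a0 : a 0%N = 1.
Hypothesis a_rec : forall k, (0 < k)%N -> a k = k%:R^-1 * \sum_(1 <= l < k.+1)
  \sum_(j < m) g j * q j ^+ l * a (k - l)%N.

Definition pow_sum l := \sum_(j < m) g j * q j ^+ l.
Definition psum N (x : R) := \sum_(k < N) a k * x ^+ k.
Definition dpsum N (x : R) := \sum_(k < N) a k * k%:R * x ^+ k.-1.
Definition ln_prod (x : R) := \sum_(j < m) g j * ln (1 - q j * x).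
Definition genf (x : R) := expR (- ln_prod x).
Definition logder (x : R) := \sum_(j < m) g j * (q j / (1 - q j * x)).
Definition logder_tail N (x : R) :=
  \sum_(j < m) g j * (q j ^+ N.+1 * x ^+ N / (1 - q j * x)).
Definition defect N (x : R) := dpsum N.+1 x - psum N.+1 x * logder x.
Definition ln_ratio N (x : R) := ln (psum N.+1 x) + ln_prod x.

Lemma pow_sum_ge0 l : 0 <= pow_sum l.
Proof. by apply: sumr_ge0 => j _; rewrite mulr_ge0 ?exprn_ge0. Qed.

Lemma a_rec_pow_sum k : (0 < k)%N ->
  k%:R * a k = \sum_(1 <= l < k.+1) pow_sum l * a (k - l)%N.
Proof.
move=> k_gt0; rewrite a_rec // mulrA mulfV ?mul1r ?pnatr_eq0 -?lt0n //.
by apply: eq_bigr => l _; rewrite /pow_sum big_distrl.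
Qed.

Lemma coef_ge0 k : 0 <= a k.
Proof.
elim/ltn_ind: k => -[|k] IH; first by rewrite a0.
rewrite a_rec // mulr_ge0 ?invr_ge0 // big_nat_cond sumr_ge0 // => l /andP[/andP[l1 lk] _].
by apply: sumr_ge0 => j _; rewrite !mulr_ge0 ?exprn_ge0 // IH //; lia.
Qed.

Lemma psumS N x : psum N.+1 x = psum N x + a N * x ^+ N.
Proof. by rewrite /psum big_ord_recr. Qed.

Lemma psum_ge0 N x : 0 <= x -> 0 <= psum N x.
Proof. by move=> x0; apply: sumr_ge0 => k _; rewrite mulr_ge0 ?coef_ge0 ?exprn_ge0. Qed.

Lemma psum_leN x n N : 0 <= x -> (n <= N)%N -> psum n x <= psum N x.
Proof.
move=> x0; apply: (@homo_leq _ (psum^~ x) (fun u v => u <= v)) => //.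
- by move=> ? ? ?; exact: le_trans.
- by move=> k; rewrite psumS lerDl mulr_ge0 ?coef_ge0 ?exprn_ge0.
Qed.

Lemma coef_le_psum k x : 0 <= x -> a k * x ^+ k <= psum k.+1 x.
Proof. by move=> x0; rewrite psumS lerDr psum_ge0. Qed.

Lemma psum_at0 N : psum N.+1 0 = 1.
Proof.
rewrite /psum big_ord_recl /= expr0 mulr1 a0 big1 ?addr0 // => i _.
by rewrite expr0n /= mulr0.
Qed.

Lemma psum_lex N x y : 0 <= x -> x <= y -> psum N x <= psum N y.
Proof.
move=> x0 xy; apply: ler_sum => k _; rewrite ler_wpM2l ?coef_ge0 //.
by rewrite lerXn2r ?nnegrE // (le_trans x0).
Qed.

Lemma psum_ge1 N x : 0 <= x -> 1 <= psum N.+1 x.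
Proof. by move=> x0; rewrite -(psum_at0 N) psum_lex. Qed.

Lemma psum_gt0 N x : 0 <= x -> 0 < psum N.+1 x.
Proof. by move=> x0; exact: lt_le_trans ltr01 (psum_ge1 N x0). Qed.

Lemma psumD_sub n l x :
  psum (n + l) x - psum n x = \sum_(i < l) a (n + i)%N * x ^+ (n + i).
Proof.
elim: l => [|l IH]; first by rewrite addn0 subrr big_ord0.
by rewrite addnS psumS big_ord_recr /= -IH; ring.
Qed.

Lemma is_derive_psum N x : is_derive x (1 : R) (psum N) (dpsum N x).
Proof.
have -> : psum N = \sum_(k < N) (fun y => a k * y ^+ k).
  by apply/funext => y; rewrite fct_sumE.
rewrite /dpsum; apply: is_derive_sum => k.
have -> : (fun y => a k * y ^+ k) = a k *: (@idfun R) ^+ k.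
  by apply/funext => y; rewrite !fctE.
apply: (is_derive_eq (is_deriveZ _ (is_deriveX _ (is_derive_id _ _)))).
by rewrite /= [_%:A]mulr1 -[RHS]mulrA.
Qed.

Lemma dpsum_conv N x :
  dpsum N x = \sum_(1 <= l < N) pow_sum l * x ^+ l.-1 * psum (N - l) x.
Proof.
elim: N => [|N IH]; first by rewrite /dpsum big_ord0 big_geq.
rewrite /dpsum big_ord_recr /= -/(dpsum N x) IH.
case: N IH => [|N] IH; first by rewrite !big_geq // mulr0 mul0r addr0.
have -> : \sum_(1 <= l < N.+2) pow_sum l * x ^+ l.-1 * psum (N.+2 - l) x =
   \sum_(1 <= l < N.+2) pow_sum l * x ^+ l.-1 * psum (N.+1 - l) x +
   x ^+ N * \sum_(1 <= l < N.+2) pow_sum l * a (N.+1 - l)%N.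
  rewrite big_distrr -big_split /= big_nat_cond [RHS]big_nat_cond.
  apply: eq_bigr => l /andP[/andP[l1 lN] _].
  rewrite subSn // psumS mulrDr; congr (_ + _).
  have e : (l.-1 + (N.+1 - l) = N)%N by lia.
  by rewrite -[in x ^+ N]e exprD; ring.
rewrite -(@a_rec_pow_sum N.+1 isT) [in RHS]big_nat_recr //= subnn /psum big_ord0.
by rewrite mulr0 addr0; ring.
Qed.

Lemma q_mul_lt1 j x : 0 <= x <= 1 -> q j * x < 1.
Proof.
move=> /andP[x0 x1]; apply: le_lt_trans (q_lt1 j).
by rewrite -[leRHS]mulr1 ler_wpM2l.
Qed.

Lemma logder_expansion N x : 0 <= x <= 1 ->
  logder x = \sum_(1 <= l < N.+1) pow_sum l * x ^+ l.-1 + logder_tail N x.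
Proof.
move=> x01; rewrite /logder /logder_tail.
under eq_bigr => j _ do
  rewrite (geometric_expansion N (negbT (lt_eqF (q_mul_lt1 j x01)))) mulrDr big_distrr.
rewrite big_split /= exchange_big /=; congr (_ + _); apply: eq_bigr => l _.
by rewrite /pow_sum big_distrl /=; apply: eq_bigr => j _; rewrite mulrA.
Qed.

Lemma defectE N x : 0 <= x <= 1 -> defect N x =
  - (\sum_(1 <= l < N.+1) pow_sum l * x ^+ l.-1 * (psum N.+1 x - psum (N.+1 - l) x)
     + psum N.+1 x * logder_tail N x).
Proof.
move=> x01; rewrite /defect dpsum_conv (logder_expansion N x01) mulrDr big_distrr /=.
under [in RHS]eq_bigr => l _ do rewrite mulrBr.
by rewrite sumrB; under [X in _ - (X + _)]eq_bigr => l _ do rewrite mulrC; ring.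
Qed.

Lemma logder_tail_ge0 N x : 0 <= x <= 1 -> 0 <= logder_tail N x.
Proof.
move=> x01; have /andP[x0 _] := x01; apply: sumr_ge0 => j _.
by rewrite !mulr_ge0 ?exprn_ge0 // invr_ge0 subr_ge0 ltW // q_mul_lt1.
Qed.

Lemma defect_le0 N x : 0 <= x <= 1 -> defect N x <= 0.
Proof.
move=> x01; have /andP[x0 _] := x01.
rewrite defectE // oppr_le0 addr_ge0 ?mulr_ge0 ?psum_ge0 ?logder_tail_ge0 //.
apply: sumr_ge0 => l _; rewrite !mulr_ge0 ?pow_sum_ge0 ?exprn_ge0 // subr_ge0.
by rewrite psum_leN // leq_subr.
Qed.

Lemma is_derive_ln_prod (x : R) : 0 <= x <= 1 -> is_derive x (1 : R) ln_prod (- logder x).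
Proof.
move=> x01.
have -> : ln_prod = \sum_(j < m) (g j *: ((@ln R) \o (fun y => 1 - q j * y))).
  by apply/funext => y; rewrite fct_sumE.
rewrite /logder -sumrN; apply: is_derive_sum => j.
have lin : is_derive x (1 : R) (fun y => 1 - q j * y) (- q j).
  have -> : (fun y => 1 - q j * y) = cst 1 - q j *: idfun by apply/funext.
  by apply: (is_derive_eq (is_deriveB _ _)); rewrite /= sub0r scaler1.
apply: (is_derive_eq (is_deriveZ _ (is_derive1_comp _ lin))).
  by apply: is_derive1_ln; rewrite subr_gt0 q_mul_lt1.
by rewrite /= -[in RHS]mulrN -[in RHS]mulNr mulrC.
Qed.

Lemma is_derive_ln_ratio N (x : R) : 0 <= x <= 1 ->
  is_derive x (1 : R) (ln_ratio N) (defect N x / psum N.+1 x).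
Proof.
move=> x01; have /andP[x0 _] := x01.
have -> : ln_ratio N = ((@ln R) \o psum N.+1) + ln_prod by [].
apply: (is_derive_eq (is_deriveD _ _)).
- apply: is_derive1_comp; last exact: is_derive_psum.
  exact/is_derive1_ln/psum_gt0.
- exact: is_derive_ln_prod.
rewrite /defect mulrBl [psum _ x * _]mulrC mulfK ?lt0r_neq0 ?psum_gt0 //.
by rewrite [_^-1 * _]mulrC.
Qed.

Lemma ln_ratio_at0 N : ln_ratio N 0 = 0.
Proof.
rewrite /ln_ratio /ln_prod psum_at0 ln1 add0r big1 // => j _.
by rewrite mulr0 subr0 ln1 mulr0.
Qed.

Lemma ln_ratio_mvt N t : 0 < t <= 1 ->
  exists2 c, 0 < c < t & ln_ratio N t = defect N c / psum N.+1 c * t.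
Proof.
move=> /andP[t0 t1].
have [c c0t eq] : exists2 c, c \in `]0, t[ &
    ln_ratio N t - ln_ratio N 0 = defect N c / psum N.+1 c * (t - 0).
  apply: MVT => // [y|].
    rewrite in_itv /= => /andP[y0 yt]; apply: is_derive_ln_ratio.
    by rewrite (ltW y0) (le_trans (ltW yt)).
  apply: derivable_within_continuous => y; rewrite in_itv /= => /andP[y0 yt].
  apply: ex_derive; apply: is_derive_ln_ratio.
  by rewrite y0 (le_trans yt).
by exists c; [move: c0t; rewrite in_itv | move: eq; rewrite ln_ratio_at0 !subr0].
Qed.

Lemma psum_le_genf N t : 0 < t <= 1 -> psum N.+1 t <= genf t.
Proof.
move=> t01; have /andP[t0 t1] := t01.
have [c /andP[c0 ct] eq_ln] := ln_ratio_mvt N t01.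
have c01 : 0 <= c <= 1 by rewrite ltW // (le_trans (ltW ct)).
have : ln_ratio N t <= 0.
  rewrite eq_ln; apply: mulr_le0_ge0; last exact: ltW.
  by apply: mulr_le0_ge0; rewrite ?defect_le0 // invr_ge0 psum_ge0 // ltW.
rewrite /ln_ratio -lerBrDr sub0r => le_ln.
by rewrite /genf -[leLHS]lnK ?posrE ?psum_gt0 ?(ltW t0) // ler_expR.
Qed.

Definition qmax := \big[Num.max/0]_(j < m) q j.
Definition gsum := \sum_(j < m) g j.

Lemma q_le_qmax j : q j <= qmax.
Proof. exact: le_bigmax. Qed.

Lemma qmax_ge0 : 0 <= qmax.
Proof. by rewrite /qmax; elim/big_ind: _ => // x y x0 _; rewrite le_max x0. Qed.

Lemma qmax_lt1 : qmax < 1.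
Proof. by apply: bigmax_lt => // j _; exact: q_lt1. Qed.

Lemma gsum_ge0 : 0 <= gsum.
Proof. exact: sumr_ge0. Qed.

Lemma pow_sum_le l : pow_sum l <= gsum * qmax ^+ l.
Proof.
rewrite /pow_sum /gsum big_distrl /=; apply: ler_sum => j _.
by rewrite ler_wpM2l // lerXn2r ?nnegrE ?qmax_ge0 ?q_le_qmax.
Qed.

Lemma logder_tail_le N x : 0 <= x <= 1 ->
  logder_tail N x <= gsum * qmax ^+ N.+1 / (1 - qmax).
Proof.
move=> x01; have /andP[x0 x1] := x01.
rewrite /logder_tail /gsum -mulrA big_distrl /=; apply: ler_sum => j _.
rewrite ler_wpM2l //; apply: ler_pM.
- by rewrite mulr_ge0 ?exprn_ge0.
- by rewrite invr_ge0 subr_ge0 ltW // q_mul_lt1.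
- rewrite -[leRHS]mulr1 ler_pM ?exprn_ge0 ?exprn_ile1 //.
  by rewrite lerXn2r ?nnegrE ?qmax_ge0 ?q_le_qmax.
rewrite lef_pV2 ?posrE ?subr_gt0 ?q_mul_lt1 ?qmax_lt1 // lerB //.
by rewrite (le_trans _ (q_le_qmax j)) // -[leRHS]mulr1 ler_wpM2l.
Qed.

Section LowerBound.
Variables t rho : R.
Hypotheses (t_gt0 : 0 < t) (t_lt_rho : t < rho) (qmax_lt_rho : qmax < rho)
  (rho_lt1 : rho < 1).

Let rho_gt0 : 0 < rho. Proof. exact: lt_trans t_gt0 t_lt_rho. Qed.

Lemma coef_le_geometric k c : 0 <= c <= t ->
  a k * c ^+ k <= genf (t / rho) * rho ^+ k.
Proof.
move=> /andP[c0 ct]; apply: (@le_trans _ _ (a k * t ^+ k)).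
  by rewrite ler_wpM2l ?coef_ge0 // lerXn2r ?nnegrE // (le_trans c0).
have -> : t ^+ k = (t / rho) ^+ k * rho ^+ k by rewrite -exprMn divfK ?gt_eqF.
rewrite mulrA ler_wpM2r ?exprn_ge0 ?(ltW rho_gt0) //.
have tr0 : 0 < t / rho by rewrite divr_gt0.
apply: le_trans (coef_le_psum _ (ltW tr0)) (psum_le_genf _ _).
by rewrite tr0 ler_pdivrMr // mul1r ltW.
Qed.

Lemma psum_tail_le n l c : 0 <= c <= t ->
  psum (n + l) c - psum n c <= genf (t / rho) * rho ^+ n / (1 - rho).
Proof.
move=> c0t; rewrite psumD_sub.
apply: (@le_trans _ _ (\sum_(i < l) genf (t / rho) * rho ^+ (n + i))).
  by apply: ler_sum => i _; exact: coef_le_geometric.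
under eq_bigr do rewrite exprD mulrA.
rewrite -big_distrr /= ler_wpM2l ?mulr_ge0 ?expR_ge0 ?exprn_ge0 ?(ltW rho_gt0) //.
by rewrite sum_expr_le // (ltW rho_gt0).
Qed.

Lemma defect_conv_le N c : 0 <= c <= t ->
  \sum_(1 <= l < N.+1) pow_sum l * c ^+ l.-1 * (psum N.+1 c - psum (N.+1 - l) c)
  <= gsum * genf (t / rho) / (1 - rho) / (1 - qmax / rho) * rho ^+ N.+1.
Proof.
move=> c0t; have /andP[c0 ct] := c0t.
have c1 : c <= 1 by rewrite (le_trans ct) // ltW // (lt_trans t_lt_rho).
have qr01 : 0 <= qmax / rho < 1.
  by rewrite divr_ge0 ?qmax_ge0 ?(ltW rho_gt0) // ltr_pdivrMr // mul1r.
apply: (@le_trans _ _ (\sum_(1 <= l < N.+1)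
    gsum * genf (t / rho) / (1 - rho) * rho ^+ N.+1 * (qmax / rho) ^+ l)).
  rewrite big_nat_cond [leRHS]big_nat_cond.
  apply: ler_sum => l /andP[/andP[l1 lN] _].
  have -> : gsum * genf (t / rho) / (1 - rho) * rho ^+ N.+1 * (qmax / rho) ^+ l =
      gsum * qmax ^+ l * (genf (t / rho) * rho ^+ (N.+1 - l) / (1 - rho)).
    rewrite -{1}(subnK (ltnW lN)) exprD exprMn exprVn.
    by field; rewrite expf_neq0 ?gt_eqF // subr_gt0.
  apply: ler_pM.
  - by rewrite mulr_ge0 ?pow_sum_ge0 ?exprn_ge0.
  - by rewrite subr_ge0 psum_leN // leq_subr.
  - by rewrite (le_trans _ (pow_sum_le l)) // -[leRHS]mulr1 ler_wpM2l ?pow_sum_ge0 ?exprn_ile1.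
  - by have := psum_tail_le (N.+1 - l) l c0t; rewrite subnK // ltnW.
rewrite -big_distrr /= [leRHS]mulrAC ler_wpM2l ?sum_expr1_le //.
by rewrite !mulr_ge0 ?gsum_ge0 ?expR_ge0 ?exprn_ge0 ?invr_ge0 ?subr_ge0
  ?(ltW rho_gt0) ?(ltW rho_lt1).
Qed.

Definition defect_const :=
  gsum * genf (t / rho) / (1 - rho) / (1 - qmax / rho) + genf t * gsum / (1 - qmax).

Lemma defect_ge N c : 0 <= c <= t -> - (defect_const * rho ^+ N.+1) <= defect N c.
Proof.
move=> c0t; have /andP[c0 ct] := c0t.
have t1 : t <= 1 by rewrite ltW // (lt_trans t_lt_rho).
have c01 : 0 <= c <= 1 by rewrite c0 (le_trans ct).
rewrite defectE // lerN2 /defect_const mulrDl lerD ?defect_conv_le //.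
apply: (@le_trans _ _ (genf t * (gsum * qmax ^+ N.+1 / (1 - qmax)))).
  apply: ler_pM; rewrite ?psum_ge0 ?logder_tail_ge0 ?logder_tail_le //.
  by rewrite (le_trans (psum_lex _ c0 ct)) // psum_le_genf // t_gt0.
have -> : genf t * gsum / (1 - qmax) * rho ^+ N.+1 =
    genf t * (gsum * rho ^+ N.+1 / (1 - qmax)) by ring.
rewrite ler_wpM2l ?expR_ge0 // ler_wpM2r ?invr_ge0 ?subr_ge0 ?(ltW qmax_lt1) //.
by rewrite ler_wpM2l ?gsum_ge0 // lerXn2r ?nnegrE ?qmax_ge0 ?(ltW qmax_lt_rho) ?(ltW rho_gt0).
Qed.

Lemma genf_le_psum N : genf t * (1 - defect_const * rho ^+ N.+1) <= psum N.+1 t.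
Proof.
have t01 : 0 < t <= 1 by rewrite t_gt0 ltW // (lt_trans t_lt_rho).
have [c /andP[c0 ct] eq_ln] := ln_ratio_mvt N t01.
have c0t : 0 <= c <= t by rewrite !ltW.
have c01 : 0 <= c <= 1 by rewrite ltW // (le_trans (ltW ct)) //; case/andP: t01.
have d_le0 := defect_le0 N c01.
have d_le : defect N c <= defect N c / psum N.+1 c.
  rewrite ler_pdivlMr ?psum_gt0 ?(ltW c0) // -[leRHS]mulr1.
  by rewrite ler_wnM2l // psum_ge1 ?(ltW c0).
have dp_le0 : defect N c / psum N.+1 c <= 0.
  by apply: mulr_le0_ge0 => //; rewrite invr_ge0 psum_ge0 // ltW.
have ln_ge : - (defect_const * rho ^+ N.+1) <= ln_ratio N t.
  rewrite eq_ln (le_trans (defect_ge N c0t)) // (le_trans d_le) //.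
  by rewrite -[leLHS]mulr1 ler_wnM2l //; case/andP: t01.
have -> : psum N.+1 t = expR (ln_ratio N t) * genf t.
  by rewrite /genf -expRD /ln_ratio addrK lnK // posrE psum_gt0 // ltW.
by rewrite mulrC ler_wpM2r ?expR_ge0 // (le_trans _ (expR_ge1Dx _)) // lerD2l.
Qed.
End LowerBound.

Lemma cvg_psum_genf t : 0 < t < 1 -> psum^~ t @ \oo --> genf t.
Proof.
move=> /andP[t0 t1].
pose rho := (1 + Num.max qmax t) / 2.
have [qr tr r1] : [/\ qmax < rho, t < rho & rho < 1].
  have qM : qmax <= Num.max qmax t by rewrite le_max lexx.
  have tM : t <= Num.max qmax t by rewrite le_max lexx orbT.
  have M1 : Num.max qmax t < 1 by rewrite gt_max qmax_lt1.
  by rewrite /rho; split; lra.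
have rho_abs : `|rho| < 1 by rewrite ger0_norm // ltW // (lt_trans t0).
set K := defect_const t rho.
have lower_cvg : (fun n => genf t * (1 - K * rho ^+ n)) @ \oo --> genf t.
  rewrite -[X in _ --> X]mulr1 -[X in _ * X]subr0 -[X in _ - X](mulr0 K).
  exact: cvgM (cvg_cst _) (cvgB (cvg_cst _) (cvgM (cvg_cst _) (cvg_expr rho_abs))).
apply: (squeeze_cvgr _ lower_cvg (cvg_cst (genf t))).
exists 1%N => // -[|N] //= _.
by rewrite genf_le_psum // psum_le_genf // t0 ltW.
Qed.

End GeneratingFunction.

Lemma genfE (R : realType) m (g q : 'I_m -> R) t :
  (forall j, q j * t < 1) -> genf g q t = \prod_(j < m) (1 - q j * t) `^ (- g j).
Proof.
move=> qt1; rewrite /genf /ln_prod -sumrN expR_sum; apply: eq_bigr => j _.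
by rewrite /powR gt_eqF ?subr_gt0 // mulNr.
Qed.

Lemma lt_Xmin (R : realType) (T : Type) n (X : 'I_n -> T -> R) (x : R) (w : T) :
  (x%:E < Xmin X w)%E <-> (forall i, x < X i w).
Proof.
rewrite /Xmin; split => [/bigmin_gtP[_ Xx] i | Xx]; first by rewrite -lte_fin Xx.
by apply/bigmin_gtP; split => [|i _]; [exact: ltry | rewrite lte_fin Xx].
Qed.

Lemma prod_powR (R : realType) (I : Type) (r : seq I) (y : R) (f : I -> R) :
  0 < y -> \prod_(i <- r) y `^ f i = y `^ (\sum_(i <- r) f i).
Proof.
move=> y0; elim: r => [|i r IH]; first by rewrite !big_nil powRr0.
by rewrite !big_cons IH powRD // (gt_eqF y0) implybT.
Qed.

Lemma powR_pareto_factor (R : realType) (b A x e : R) :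
  0 < b -> b <= A -> 0 <= x ->
  (1 + x / b) `^ (- e) =
  (b / A) `^ e * (1 + x / A) `^ (- e) * (1 - (1 - b / A) / (1 + x / A)) `^ (- e).
Proof.
move=> b0 bA x0; have A0 : 0 < A := lt_le_trans b0 bA.
have y1 : 1 <= 1 + x / A by rewrite lerDl divr_ge0 // ltW.
have y0 : 0 < 1 + x / A := lt_le_trans ltr01 y1.
have r0 : 0 < b / A by rewrite divr_gt0.
have u0 : 0 < 1 - (1 - b / A) / (1 + x / A).
  by rewrite subr_gt0 ltr_pdivrMr // mul1r (lt_le_trans _ y1) // ltrBlDr ltrDl.
have factor : b / A * (1 + x / b) = (1 + x / A) * (1 - (1 - b / A) / (1 + x / A)).
  by field; rewrite !lt0r_neq0 // (lt_le_trans A0) // lerDl.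
have bx0 : 0 <= 1 + x / b by rewrite addr_ge0 ?divr_ge0 // ltW.
rewrite -[RHS]mulrA -powRM ?ltW // -factor (powRM _ (ltW r0) bx0) mulrA.
by rewrite [(b / A) `^ (- e)]powRN mulfV ?mul1r // gt_eqF // powR_gt0.
Qed.

Lemma sum_powR_psum (R : realType) (a : nat -> R) (C y s : R) N : 0 < y ->
  \sum_(k < N) C * a k * y `^ (- (s + k%:R)) = C * y `^ (- s) * psum a N y^-1.
Proof.
move=> y0; rewrite /psum big_distrr; apply: eq_bigr => k _.
by rewrite opprD powRD ?(gt_eqF y0) ?implybT // powR_invn ?ltW // -exprVn mulrACA.
Qed.

Lemma eseries_EFin (R : realType) (u : nat -> R) (l : R) :
  (fun N => \sum_(k < N) u k) @ \oo --> l -> (\sum_(0 <= k <oo) (u k)%:E)%E = l%:E.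
Proof.
move=> ul; have -> : (fun N => (\sum_(0 <= k < N) (u k)%:E)%E) =
    EFin \o (fun N => \sum_(k < N) u k).
  by apply/funext => N /=; rewrite sumEFin big_mkord.
by rewrite EFin_lim ?(cvg_lim _ ul) //; apply/cvg_ex; exists l.
Qed.

Section ParetoParameters.
Variables (R : realType) (n : nat) (c : 'M[R]_(n, n.+1)) (sigma : 'I_n -> R).
Hypotheses (c01 : forall i j, c i j = 0 \/ c i j = 1)
  (col1 : forall j, exists i, c i j = 1) (sigma_gt0 : forall i, 0 < sigma i).

Lemma alpha_gt0 j : 0 < alpha c sigma j.
Proof.
have [i ci1] := col1 j; rewrite invr_gt0 (bigD1 i) //= ci1 mul1r.
rewrite ltr_wpDr ?invr_gt0 //; apply: sumr_ge0 => k _.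
by rewrite divr_ge0 ?(ltW (sigma_gt0 k)) //; case: (c01 k j) => ->.
Qed.

Lemma alpha_le_plus j : alpha c sigma j <= alpha_plus c sigma.
Proof. exact: le_bigmax. Qed.

Lemma alpha_plus_gt0 : 0 < alpha_plus c sigma.
Proof. exact: lt_le_trans (alpha_gt0 ord0) (alpha_le_plus ord0). Qed.

Lemma sum_c_div_sigma x j :
  \sum_(i < n) c i j / sigma i * x = x / alpha c sigma j.
Proof. by rewrite -big_distrl /= /alpha invrK mulrC. Qed.

Lemma prod_pareto_factor (gamma : 'I_n.+1 -> R) x : 0 <= x ->
  \prod_(j < n.+1) (1 + x / alpha c sigma j) `^ (- gamma j) =
  c_plus c sigma gamma * (1 + x / alpha_plus c sigma) `^ (- gamma_star gamma) *
  \prod_(j < n.+1) (1 - (1 - alpha c sigma j / alpha_plus c sigma) *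
                        (1 + x / alpha_plus c sigma)^-1) `^ (- gamma j).
Proof.
move=> x0; rewrite /c_plus /gamma_star -sumrN -prod_powR; last first.
  by rewrite (lt_le_trans ltr01) // lerDl divr_ge0 // ltW // alpha_plus_gt0.
rewrite -!big_split /=; apply: eq_bigr => j _.
by rewrite (powR_pareto_factor _ (alpha_gt0 j) (alpha_le_plus j)).
Qed.

End ParetoParameters.

Theorem theorem2p4 (R : realType) (d : measure_display) (T : measurableType d)
  (P : probability T R) (n : nat) (c : 'M[R]_(n, n.+1))
  (sigma : 'I_n -> R) (gamma : 'I_n.+1 -> R)
  (X : 'I_n -> {RV P >-> R}) (delta : nat -> R) :
  (forall i j, c i j = 0 \/ c i j = 1) ->
  (forall i, exists j, c i j = 1) ->
  (forall j, exists i, c i j = 1) ->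
  (forall i, 0 < sigma i) ->
  (forall j, 0 < gamma j) ->
  1 < gamma_star gamma ->
  (forall x : 'I_n -> R, (forall i, 0 < x i) ->
     P [set w | forall i, x i < X i w] =
     (\prod_(j < n.+1) (1 + \sum_(i < n) c i j / sigma i * x i) `^ (- gamma j))%:E) ->
  delta 0%N = 1 ->
  (forall k : nat, (0 < k)%N ->
     delta k = k%:R^-1 * \sum_(1 <= l < k.+1) \sum_(j < n.+1)
        gamma j * (1 - alpha c sigma j / alpha_plus c sigma) ^+ l * delta (k - l)%N) ->
  forall x : R, 0 < x ->
    P [set w | (x%:E < Xmin (fun i => (X i : T -> R)) w)%E] =
    (\sum_(0 <= k <oo)
       ((c_plus c sigma gamma * delta k) *
        (1 + x / alpha_plus c sigma) `^ (- (gamma_star gamma + k%:R)))%:E)%E.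
Proof.
move=> c01 _ col1 sigma_gt0 gamma_gt0 _ surv delta0 delta_rec x x_gt0.
have ap_gt0 := alpha_plus_gt0 c01 col1 sigma_gt0.
set ap := alpha_plus c sigma in ap_gt0 delta_rec *.
pose q j := 1 - alpha c sigma j / ap.
have q_ge0 j : 0 <= q j by rewrite subr_ge0 ler_pdivrMr // mul1r alpha_le_plus.
have q_lt1 j : q j < 1 by rewrite gtrBl divr_gt0 // alpha_gt0.
set y := 1 + x / ap; set t := y^-1.
have y_gt1 : 1 < y by rewrite ltrDl divr_gt0.
have y_gt0 : 0 < y := lt_trans ltr01 y_gt1.
have t01 : 0 < t < 1 by rewrite invr_gt0 y_gt0 invf_lt1.
have qt_lt1 j : q j * t < 1.
  by rewrite (le_lt_trans _ (q_lt1 j)) // ler_piMr // ltW //; case/andP: t01.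
have -> : [set w | (x%:E < Xmin (fun i => (X i : T -> R)) w)%E] =
    [set w | forall i, (fun=> x) i < X i w].
  by apply/funext => w; apply/propext; exact: lt_Xmin.
rewrite surv //=.
under eq_bigr do rewrite sum_c_div_sigma.
rewrite prod_pareto_factor ?ltW // -/ap -/y -/t -(genfE _ qt_lt1).
symmetry; apply: eseries_EFin.
under eq_fun do rewrite sum_powR_psum //.
apply: cvgM (cvg_cst _) _.
have gamma_ge0 j : 0 <= gamma j by exact: ltW.
exact: (cvg_psum_genf gamma_ge0 q_ge0 q_lt1 delta0 delta_rec t01).
Qed.
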